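(* Let $\overline{H}_n = \sum_{j=1}^n \frac{(-1)^{j-1}}{j}$, let $\{x\} = x - \lfloor x \rfloor$ denote the fractional part, let $\operatorname{Ein}(z) = \int_0^z \frac{1 - e^{-t}}{t}\,dt$, let $\gamma$ be the Euler–Mascheroni constant and let $\delta = \int_0^\infty \frac{e^{-x}}{1+x}\,dx$ be the Euler–Gompertz constant. Then $$\sum_{n = 1}^\infty \frac{\overline{H}_n \{n!\, e \}}{n!} = e \left[\operatorname{Ein}(2) - \gamma\right] - \cosh(1) - \delta + 1.$$ *)

From Stdlib Require Import Reals Arith.
From Coquelicot Require Import Coquelicot.
Open Scope R_scope.

Definition Hbar (n : nat) : R :=
  match n with
  | O => 0
  | S m => sum_f_R0 (fun k => (-1) ^ k / INR (S k)) m
  end.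

Definition euler_gamma : R :=
  real (Lim_seq (fun n => sum_f_R0 (fun k => / INR (S k)) (pred n) - ln (INR n))).

Definition euler_gompertz : R :=
  RInt_gen (fun x => exp (- x) / (1 + x)) (at_point 0) (Rbar_locally p_infty).

(* Ein(z) = int_0^z (1 - e^{-t})/t dt  (Riemann integral; the integrand
   has a removable singularity at t = 0, irrelevant for the integral) *)
Definition Ein (z : R) : R := RInt (fun t => (1 - exp (- t)) / t) 0 z.

Definition summand (n : nat) : R :=
  Hbar n * frac_part (INR (fact n) * exp 1) / INR (fact n).

(* Let r_n = e - sum_{k<=n} 1/k! = int_0^1 e^t (1 - t)^n / n! dt.  Since n! (e - r_n) is
   an integer and 0 < n! r_n < 1, the fractional part of n! e is n! r_n, so the n-th summand
   is Hbar_n r_n.  With Hbar_(m+1) = int_0^1 sum_{k<=m} (-x)^k dx and a summation by parts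
   against r_n - r_(n+1) = 1/(n+1)!, the partial sum up to N is the integral over [0, 1] of
     (T_N (1 + x) - e + s_N(-x) + r_N (-x)^(N+1)) / (1 + x)^2,
   where T_N = sum_{n<=N} r_n -> e and s_N is the Taylor polynomial of exp.  Hence the series
   converges, at rate O(1/(N-1)!), to e ln 2 - int_0^1 (e - e^-x)/(1 + x)^2 dx
   = e ln 2 - cosh 1 + 1 - int_0^1 e^-x/(1 + x) dx.
   Both constants are then expressed through E1(2) = int_2^oo e^-u/u du: the substitution
   u = x + 1 gives delta = int_0^1 e^-x/(1 + x) dx + e E1(2), and writing
   H_n = int_0^n (1 - (1 - t/n)^n)/t dt with 0 <= e^-t - (1 - t/n)^n <= t^2 e^-t / n gives
   gamma = Ein(2) - ln 2 - E1(2). *)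

From Stdlib Require Import Reals Arith Lra Lia.
From Coquelicot Require Import Coquelicot.
Open Scope R_scope.

Lemma continuous_of_ex_derive (f : R -> R) (x : R) : ex_derive f x -> continuous f x.
Proof. apply (@ex_derive_continuous R_AbsRing R_NormedModule). Qed.

Lemma is_RInt_of_derive (f df : R -> R) (a b : R) :
  (forall x, Rmin a b <= x <= Rmax a b -> is_derive f x (df x)) ->
  (forall x, Rmin a b <= x <= Rmax a b -> continuous df x) ->
  is_RInt df a b (f b - f a).
Proof. exact (@is_RInt_derive R_CompleteNormedModule f df a b). Qed.

Lemma ex_RInt_of_ex_derive (f : R -> R) (a b : R) :
  (forall x, Rmin a b <= x <= Rmax a b -> ex_derive f x) -> ex_RInt f a b.
Proof.
  intros Hf. apply (@ex_RInt_continuous R_CompleteNormedModule).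
  intros x Hx. apply continuous_of_ex_derive, Hf, Hx.
Qed.

Lemma is_RInt_sum_f_R0 (f : nat -> R -> R) (I : nat -> R) (a b : R) (m : nat) :
  (forall k, is_RInt (f k) a b (I k)) ->
  is_RInt (fun x => sum_f_R0 (fun k => f k x) m) a b (sum_f_R0 I m).
Proof.
  intros Hf. induction m as [|m IH]; [exact (Hf 0%nat)|].
  exact (is_RInt_plus _ _ _ _ _ _ IH (Hf (S m))).
Qed.

Lemma is_RInt_affine_pow (u v a b : R) (k : nat) : u <> 0 ->
  is_RInt (fun x => (u * x + v) ^ k) a b
    (((u * b + v) ^ S k - (u * a + v) ^ S k) / (u * INR (S k))).
Proof.
  intros Hu. assert (Hk : INR (S k) <> 0) by (apply not_0_INR; lia).
  set (F := fun x => (u * x + v) ^ S k / (u * INR (S k))).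
  replace (_ / _) with (F b - F a) by (unfold F; field; auto).
  apply is_RInt_of_derive.
  - intros x _. unfold F. auto_derive; [auto|]. field. auto.
  - intros x _. apply continuous_of_ex_derive. auto_derive. auto.
Qed.

Lemma is_lim_seq_of_rate (u : nat -> R) (l K : R) :
  (forall n, Rabs (u n - l) <= K / INR (S n)) -> is_lim_seq u l.
Proof.
  intros Hu. apply is_lim_seq_spec. intros eps.
  assert (HK : 0 <= K).
  { specialize (Hu 0%nat). simpl in Hu. pose proof (Rabs_pos (u 0%nat - l)). lra. }
  pose proof (cond_pos eps) as Heps.
  destruct (nfloor_ex (K / eps)) as [N HN].
  { apply Rdiv_le_0_compat; lra. }
  exists N. intros n Hn. eapply Rle_lt_trans; [apply Hu|].
  assert (HNn : INR N <= INR n) by (apply le_INR; lia).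
  rewrite S_INR. apply Rlt_div_l; [pose proof (pos_INR n); lra|].
  destruct HN as [_ HN]. apply Rlt_div_l in HN; [nra|lra].
Qed.

Lemma pow_le_one (x : R) (n : nat) : 0 <= x <= 1 -> x ^ n <= 1.
Proof. intros Hx. rewrite <- (pow1 n). apply pow_incr, Hx. Qed.

Lemma inv_pos_le_1 (c : R) : 1 <= c -> 0 < / c <= 1.
Proof.
  intros Hc. split; [apply Rinv_0_lt_compat; lra|].
  rewrite <- Rinv_1. apply Rinv_le_contravar; lra.
Qed.

Lemma exp_le_exp (x y : R) : x <= y -> exp x <= exp y.
Proof. intros [H|H]; [apply Rlt_le, exp_increasing, H | rewrite H; apply Rle_refl]. Qed.

Lemma Bernoulli_ineq (x : R) (n : nat) : -1 <= x -> 1 + INR n * x <= (1 + x) ^ n.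
Proof.
  intros Hx. induction n as [|n IH]; [simpl; lra|].
  rewrite S_INR. simpl pow. pose proof (pos_INR n). nra.
Qed.

Definition exp_taylor (N : nat) (y : R) : R := sum_f_R0 (fun k => y ^ k / INR (fact k)) N.

Lemma exp_taylor_succ (N : nat) (y : R) :
  exp_taylor (S N) y = exp_taylor N y + y ^ S N / INR (fact (S N)).
Proof. reflexivity. Qed.

Lemma exp_taylor_remainder (N : nat) (y : R) :
  is_RInt (fun t => exp t * (y - t) ^ N / INR (fact N)) 0 y (exp y - exp_taylor N y).
Proof.
  induction N as [|N IH].
  - replace (exp y - exp_taylor 0 y) with (exp y - exp 0)
      by (unfold exp_taylor; simpl; rewrite exp_0; field).
    apply (is_RInt_ext exp); [intros; simpl; field|].
    apply is_RInt_of_derive; intros x _;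
      [apply is_derive_exp | apply continuous_of_ex_derive; auto_derive; auto].
  - set (F := fun t => - exp t * (y - t) ^ S N / INR (fact (S N))).
    assert (Hstep : is_RInt (fun t => exp t * (y - t) ^ N / INR (fact N)
                                      - exp t * (y - t) ^ S N / INR (fact (S N)))
                      0 y (F y - F 0)).
    { assert (HN := INR_fact_neq_0 N).
      assert (HSN : INR (S N) <> 0) by (apply not_0_INR; lia).
      apply is_RInt_of_derive.
      - intros x _. unfold F. rewrite fact_simpl, mult_INR.
        auto_derive; [auto|].
        change (match N with 0%nat => 1 | S _ => INR N + 1 end) with (INR (S N)).
        change (y + - x) with (y - x). simpl pow. field. auto.
      - intros x _. apply continuous_of_ex_derive. auto_derive. auto. }
    apply (is_RInt_ext (fun t => minus (exp t * (y - t) ^ N / INR (fact N))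
             (exp t * (y - t) ^ N / INR (fact N) - exp t * (y - t) ^ S N / INR (fact (S N))))).
    { intros x _. unfold minus, plus, opp; simpl. ring. }
    replace (exp y - exp_taylor (S N) y) with (exp y - exp_taylor N y - (F y - F 0)).
    { exact (is_RInt_minus _ _ _ _ _ _ IH Hstep). }
    unfold F. rewrite exp_taylor_succ, Rminus_diag, Rminus_0_r, pow_i, exp_0 by lia.
    field. apply INR_fact_neq_0.
Qed.

Lemma exp_taylor_error_le (N : nat) (y : R) :
  Rabs (exp y - exp_taylor N y) <= exp (Rmax 0 y) * Rabs y ^ S N / INR (fact N).
Proof.
  pose proof (INR_fact_lt_0 N) as HN.
  replace (exp (Rmax 0 y) * Rabs y ^ S N / INR (fact N))
    with (Rabs (y - 0) * (exp (Rmax 0 y) * Rabs y ^ N / INR (fact N)))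
    by (rewrite Rminus_0_r; simpl; field; lra).
  apply (norm_RInt_le_const_abs (V := R_NormedModule)
           (fun t => exp t * (y - t) ^ N / INR (fact N)) 0 y);
    [|apply exp_taylor_remainder].
  intros t Ht.
  assert (Hbounds : t <= Rmax 0 y /\ Rabs (y - t) <= Rabs y).
  { unfold Rmin, Rmax in *. destruct (Rle_dec 0 y);
      split; try lra; apply Rabs_le; unfold Rabs; destruct (Rcase_abs y); lra. }
  change (norm _) with (Rabs (exp t * (y - t) ^ N / INR (fact N))).
  rewrite Rabs_div by lra. rewrite Rabs_mult, <- RPow_abs.
  rewrite (Rabs_pos_eq (exp t)) by apply Rlt_le, exp_pos.
  rewrite (Rabs_pos_eq (INR (fact N))) by lra.
  apply Rmult_le_compat_r; [apply Rlt_le, Rinv_0_lt_compat; lra|].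
  apply Rmult_le_compat; [apply Rlt_le, exp_pos | apply pow_le, Rabs_pos | |].
  - apply exp_le_exp, Hbounds.
  - apply pow_incr. split; [apply Rabs_pos | apply Hbounds].
Qed.

Lemma exp_1_lt_3 : exp 1 < 3.
Proof.
  pose proof (exp_taylor_error_le 4 1) as H.
  rewrite Rmax_right, Rabs_R1, pow1 in H by lra.
  pose proof (Rle_abs (exp 1 - exp_taylor 4 1)).
  unfold exp_taylor in *. simpl in *. lra.
Qed.

Definition e_tail (n : nat) : R := exp 1 - exp_taylor n 1.

Lemma e_tail_succ (n : nat) : e_tail n = e_tail (S n) + / INR (fact (S n)).
Proof. unfold e_tail. rewrite exp_taylor_succ, pow1. field. apply INR_fact_neq_0. Qed.

Lemma fact_mul_e_tail_RInt (n : nat) :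
  is_RInt (fun t => exp t * (1 - t) ^ n) 0 1 (INR (fact n) * e_tail n).
Proof.
  apply (is_RInt_ext (fun t => scal (INR (fact n)) (exp t * (1 - t) ^ n / INR (fact n)))).
  - intros t _. unfold scal; simpl; unfold mult; simpl. field. apply INR_fact_neq_0.
  - exact (is_RInt_scal _ _ _ _ _ (exp_taylor_remainder n 1)).
Qed.

Lemma e_tail_pos (n : nat) : 0 < e_tail n.
Proof.
  pose proof (INR_fact_lt_0 (S n)) as Hfact.
  assert (H : 0 <= INR (fact (S n)) * e_tail (S n)).
  { apply (is_RInt_ge_0 _ 0 1 _ ltac:(lra) (fact_mul_e_tail_RInt (S n))).
    intros t Ht. apply Rmult_le_pos; [apply Rlt_le, exp_pos | apply pow_le; lra]. }
  assert (0 <= e_tail (S n)) by (apply (Rmult_le_reg_l (INR (fact (S n)))); lra).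
  rewrite e_tail_succ. pose proof (Rinv_0_lt_compat _ Hfact). lra.
Qed.

(* The integrand [exp t * (1 - t) ^ n] decreases in [n], and for [n = 1] the
   integral is [e - 2 < 1]. *)
Lemma fact_mul_e_tail_lt_1 (n : nat) : (1 <= n)%nat -> INR (fact n) * e_tail n < 1.
Proof.
  intros Hn.
  assert (Hle : INR (fact n) * e_tail n <= INR (fact 1) * e_tail 1).
  { apply (is_RInt_le _ _ 0 1 _ _ ltac:(lra) (fact_mul_e_tail_RInt n) (fact_mul_e_tail_RInt 1)).
    intros t Ht. apply Rmult_le_compat_l; [apply Rlt_le, exp_pos|].
    destruct n as [|n]; [lia|]. simpl.
    apply Rmult_le_compat_l; [lra|].
    apply pow_le_one. lra. }
  assert (E : INR (fact 1) * e_tail 1 = exp 1 - 2) by (unfold e_tail, exp_taylor; simpl; field).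
  pose proof exp_1_lt_3. lra.
Qed.

Lemma fact_mul_exp_taylor_1 (n : nat) : exists k : nat, INR (fact n) * exp_taylor n 1 = INR k.
Proof.
  induction n as [|n [k Hk]]; [exists 1%nat; unfold exp_taylor; simpl; field|].
  exists (S n * k + 1)%nat.
  rewrite exp_taylor_succ, pow1, fact_simpl, plus_INR, !mult_INR, <- Hk.
  assert (HSn : INR (S n) <> 0) by (apply not_0_INR; lia).
  assert (Hn := INR_fact_neq_0 n).
  simpl (INR 1). field. auto.
Qed.

Lemma frac_part_INR_plus (m : nat) (f : R) : 0 <= f < 1 -> frac_part (INR m + f) = f.
Proof.
  intros Hf. symmetry. apply (Int_part_frac_part_spec _ (Z.of_nat m) _ Hf).
  rewrite INR_IZR_INZ. reflexivity.
Qed.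

Lemma summand_eq (n : nat) : (1 <= n)%nat -> summand n = Hbar n * e_tail n.
Proof.
  intros Hn. unfold summand. destruct (fact_mul_exp_taylor_1 n) as [k Hk].
  replace (INR (fact n) * exp 1) with (INR k + INR (fact n) * e_tail n)
    by (unfold e_tail; rewrite <- Hk; ring).
  pose proof (e_tail_pos n). pose proof (INR_fact_lt_0 n).
  pose proof (fact_mul_e_tail_lt_1 n Hn).
  rewrite frac_part_INR_plus by (split; nra).
  field. apply INR_fact_neq_0.
Qed.

Lemma Hbar_S_RInt (m : nat) :
  is_RInt (fun x => sum_f_R0 (fun k => (- x) ^ k) m) 0 1 (Hbar (S m)).
Proof.
  change (Hbar (S m)) with (sum_f_R0 (fun k => (-1) ^ k / INR (S k)) m).
  apply (is_RInt_sum_f_R0 (fun k x => (- x) ^ k)). intros k.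
  apply (is_RInt_ext (fun x => (-1 * x + 0) ^ k)); [intros x _; f_equal; ring|].
  replace ((-1) ^ k / INR (S k))
    with (((-1 * 1 + 0) ^ S k - (-1 * 0 + 0) ^ S k) / (-1 * INR (S k))).
  - apply is_RInt_affine_pow. lra.
  - assert (INR (S k) <> 0) by (apply not_0_INR; lia).
    rewrite !Rplus_0_r, Rmult_0_r, pow_i by lia.
    replace (-1 * 1) with (-1) by ring. simpl pow. field. auto.
Qed.

Lemma one_add_mul_alt_geom (m : nat) (x : R) :
  (1 + x) * sum_f_R0 (fun k => (- x) ^ k) m = 1 - (- x) ^ S m.
Proof.
  replace ((1 + x) * _) with (- (sum_f_R0 (fun k => (- x) ^ k) m * (- x - 1))) by ring.
  rewrite GP_finite, Nat.add_1_r. ring.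
Qed.

Definition partial_integrand (M : nat) (x : R) : R :=
  sum_f_R0 (fun m => e_tail (S m) * sum_f_R0 (fun k => (- x) ^ k) m) M.

Lemma partial_sum_RInt (M : nat) :
  is_RInt (partial_integrand M) 0 1 (sum_f_R0 (fun m => summand (S m)) M).
Proof.
  unfold partial_integrand.
  apply (is_RInt_sum_f_R0 (fun m x => e_tail (S m) * sum_f_R0 (fun k => (- x) ^ k) m)).
  intros m. rewrite summand_eq, Rmult_comm by lia.
  exact (is_RInt_scal _ _ _ _ _ (Hbar_S_RInt m)).
Qed.

Lemma e_tail_Abel (N : nat) (y : R) :
  (1 - y) * sum_f_R0 (fun n => e_tail n * y ^ n) N
  = exp 1 - exp_taylor N y - e_tail N * y ^ S N.
Proof.
  induction N as [|N IH]; [unfold e_tail, exp_taylor; simpl; field|].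
  rewrite tech5, Rmult_plus_distr_l, IH, (e_tail_succ N), exp_taylor_succ.
  simpl pow. field. apply INR_fact_neq_0.
Qed.

Lemma one_add_mul_partial_integrand (M : nat) (x : R) :
  (1 + x) * partial_integrand M x
  = sum_f_R0 e_tail (S M) - sum_f_R0 (fun n => e_tail n * (- x) ^ n) (S M).
Proof.
  unfold partial_integrand.
  induction M as [|M IH]; [simpl; ring|].
  rewrite tech5, Rmult_plus_distr_l, IH, (tech5 e_tail (S M)),
    (tech5 (fun n => e_tail n * (- x) ^ n) (S M)).
  rewrite <- Rmult_assoc, (Rmult_comm (1 + x)), Rmult_assoc, one_add_mul_alt_geom. ring.
Qed.

Definition partial_error (N : nat) (x : R) : R :=
  (exp_taylor N (- x) - exp (- x) + e_tail N * (- x) ^ S N) / (1 + x) ^ 2.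

Lemma partial_integrand_eq (M : nat) (x : R) : x <> -1 ->
  partial_integrand M x
  = sum_f_R0 e_tail (S M) / (1 + x) - (exp 1 - exp (- x)) / (1 + x) ^ 2
    + partial_error (S M) x.
Proof.
  intros Hx. assert (H1x : 1 + x <> 0) by lra.
  apply (Rmult_eq_reg_l (1 + x)); [|exact H1x].
  rewrite one_add_mul_partial_integrand.
  pose proof (e_tail_Abel (S M) (- x)) as HAbel.
  replace (1 - - x) with (1 + x) in HAbel by ring.
  apply (Rmult_eq_reg_l (1 + x)); [|exact H1x].
  rewrite Rmult_minus_distr_l, HAbel. unfold partial_error. field. exact H1x.
Qed.

Lemma RInt_inv_one_add : is_RInt (fun x => / (1 + x)) 0 1 (ln 2).
Proof.
  replace (ln 2) with (ln (1 + 1) - ln (1 + 0))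
    by (rewrite Rplus_0_r, ln_1, Rminus_0_r; f_equal; ring).
  apply (is_RInt_of_derive (fun x => ln (1 + x))); intros x Hx;
    rewrite Rmin_left, Rmax_right in Hx by lra.
  - auto_derive; [lra | field; lra].
  - apply continuous_of_ex_derive. auto_derive. lra.
Qed.

Definition gompertz_head : R := RInt (fun x => exp (- x) / (1 + x)) 0 1.

Lemma ex_RInt_gompertz_integrand (a b : R) : 0 <= a -> 0 <= b ->
  ex_RInt (fun x => exp (- x) / (1 + x)) a b.
Proof.
  intros Ha Hb. apply ex_RInt_of_ex_derive. intros x Hx.
  assert (0 <= x) by (unfold Rmin in Hx; destruct (Rle_dec a b); lra).
  auto_derive. lra.
Qed.

Lemma RInt_exp_sub_div_sq :
  is_RInt (fun x => (exp 1 - exp (- x)) / (1 + x) ^ 2) 0 1 (cosh 1 - 1 + gompertz_head).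
Proof.
  set (F := fun x => (exp (- x) - exp 1) / (1 + x)).
  set (dF := fun x => (exp 1 - exp (- x)) / (1 + x) ^ 2 - exp (- x) / (1 + x)).
  assert (HF : is_RInt dF 0 1 (F 1 - F 0)).
  { apply is_RInt_of_derive; intros x Hx; rewrite Rmin_left, Rmax_right in Hx by lra;
      assert (H1x : 1 + x <> 0) by (apply Rgt_not_eq; lra).
    - unfold F, dF. auto_derive; [exact H1x|]. field. exact H1x.
    - apply continuous_of_ex_derive. unfold dF. auto_derive.
      rewrite Rmult_1_r. repeat split; auto using Rmult_integral_contrapositive_currified. }
  assert (Hhead := RInt_correct _ _ _ (ex_RInt_gompertz_integrand 0 1 ltac:(lra) ltac:(lra))).
  apply (is_RInt_ext (fun x => dF x + exp (- x) / (1 + x))).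
  { intros x _. unfold dF. simpl. ring. }
  replace (cosh 1 - 1 + gompertz_head) with (F 1 - F 0 + gompertz_head).
  - exact (is_RInt_plus _ _ _ _ _ _ HF Hhead).
  - unfold F, cosh. rewrite Ropp_0, exp_0, exp_Ropp. field. apply Rgt_not_eq, exp_pos.
Qed.

Lemma partial_error_RInt (M : nat) :
  is_RInt (partial_error (S M)) 0 1
    (sum_f_R0 (fun m => summand (S m)) M - sum_f_R0 e_tail (S M) * ln 2
     + (cosh 1 - 1 + gompertz_head)).
Proof.
  set (T := sum_f_R0 e_tail (S M)).
  apply (is_RInt_ext (fun x =>
    partial_integrand M x - T * / (1 + x) + (exp 1 - exp (- x)) / (1 + x) ^ 2)).
  { intros x Hx. rewrite Rmin_left, Rmax_right in Hx by lra.
    simpl. rewrite partial_integrand_eq by lra. unfold T. field. lra. }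
  exact (is_RInt_plus _ _ _ _ _ _
           (is_RInt_minus _ _ _ _ _ _ (partial_sum_RInt M)
              (is_RInt_scal _ _ _ T _ RInt_inv_one_add))
           RInt_exp_sub_div_sq).
Qed.

Lemma partial_error_le (N : nat) (x : R) : 0 <= x <= 1 ->
  Rabs (partial_error N x) <= / INR (fact N) + e_tail N.
Proof.
  intros Hx. unfold partial_error.
  assert (Htaylor : Rabs (exp_taylor N (- x) - exp (- x)) <= / INR (fact N)).
  { rewrite Rabs_minus_sym. eapply Rle_trans; [apply exp_taylor_error_le|].
    rewrite Rmax_left, exp_0, Rabs_Ropp, Rabs_pos_eq by lra.
    pose proof (pow_le_one x (S N) Hx). pose proof (pow_le x (S N) (proj1 Hx)).
    pose proof (Rinv_0_lt_compat _ (INR_fact_lt_0 N)). unfold Rdiv. nra. }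
  assert (Hpow : Rabs ((- x) ^ S N) <= 1).
  { rewrite <- RPow_abs, Rabs_Ropp, Rabs_pos_eq by lra. apply pow_le_one, Hx. }
  pose proof (e_tail_pos N). pose proof (Rabs_pos ((- x) ^ S N)).
  set (num := exp_taylor N (- x) - exp (- x) + e_tail N * (- x) ^ S N).
  assert (Hnum : Rabs num <= / INR (fact N) + e_tail N).
  { unfold num. eapply Rle_trans; [apply Rabs_triang|].
    rewrite Rabs_mult, (Rabs_pos_eq (e_tail N)) by lra. nra. }
  rewrite Rabs_div by (apply pow_nonzero; lra).
  rewrite (Rabs_pos_eq ((1 + x) ^ 2)) by (apply pow_le; lra).
  apply Rle_div_l; [apply pow_lt; lra|].
  pose proof (Rabs_pos num). nra.
Qed.

Lemma sum_e_tail (N : nat) :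
  sum_f_R0 e_tail N = exp 1 + INR N * e_tail N - / INR (fact N).
Proof.
  induction N as [|N IH]; [unfold e_tail, exp_taylor; simpl; field|].
  assert (HSN : INR (S N) <> 0) by (apply not_0_INR; lia).
  assert (HN := INR_fact_neq_0 N).
  rewrite tech5, IH, (e_tail_succ N), fact_simpl, mult_INR.
  rewrite S_INR in *. field. auto.
Qed.

Lemma sum_e_tail_sub_e_le (M : nat) :
  Rabs (sum_f_R0 e_tail (S M) - exp 1) <= / INR (fact M).
Proof.
  rewrite sum_e_tail.
  pose proof (fact_mul_e_tail_lt_1 (S M) ltac:(lia)) as Hlt.
  pose proof (e_tail_pos (S M)).
  rewrite fact_simpl, mult_INR in *.
  assert (Hs : 1 <= INR (S M)) by (apply (le_INR 1); lia).
  pose proof (INR_fact_lt_0 M) as Hf.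
  rewrite Rinv_mult.
  set (s := INR (S M)) in *. set (f := INR (fact M)) in *.
  pose proof (inv_pos_le_1 s Hs) as Hinvs.
  assert (Hsr : s * e_tail (S M) < / f).
  { apply (Rmult_lt_reg_l f); [lra|]. rewrite Rinv_r by lra. lra. }
  pose proof (Rinv_0_lt_compat _ Hf).
  apply Rabs_le. split; nra.
Qed.

Lemma partial_sum_sub_limit_le (M : nat) :
  Rabs (sum_f_R0 (fun m => summand (S m)) M - (exp 1 * ln 2 - cosh 1 + 1 - gompertz_head))
  <= 3 / INR (fact M).
Proof.
  set (P := sum_f_R0 (fun m => summand (S m)) M).
  set (T := sum_f_R0 e_tail (S M)).
  assert (Herr : Rabs (P - T * ln 2 + (cosh 1 - 1 + gompertz_head))
                 <= / INR (fact (S M)) + e_tail (S M)).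
  { eapply Rle_trans.
    - apply (norm_RInt_le_const (V := R_NormedModule) (partial_error (S M)) 0 1); [lra| |].
      + intros x Hx. apply partial_error_le, Hx.
      + apply partial_error_RInt.
    - lra. }
  assert (HT := sum_e_tail_sub_e_le M). fold T in HT.
  assert (Hfact : / INR (fact (S M)) <= / INR (fact M)).
  { apply Rinv_le_contravar; [apply INR_fact_lt_0|]. apply le_INR, fact_le. lia. }
  assert (Htail : e_tail (S M) <= / INR (fact (S M))).
  { pose proof (fact_mul_e_tail_lt_1 (S M) ltac:(lia)). pose proof (INR_fact_lt_0 (S M)).
    apply (Rmult_le_reg_l (INR (fact (S M)))); [lra|]. rewrite Rinv_r; lra. }
  assert (Hln2 : 0 < ln 2 <= 1).
  { split; [pose proof ln_lt_2; lra|].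
    rewrite <- (ln_exp 1). apply ln_le; [lra|]. pose proof (exp_ineq1_le 1). lra. }
  replace (P - _) with ((P - T * ln 2 + (cosh 1 - 1 + gompertz_head)) + (T - exp 1) * ln 2) by ring.
  eapply Rle_trans; [apply Rabs_triang|].
  rewrite Rabs_mult, (Rabs_pos_eq (ln 2)) by lra.
  pose proof (Rabs_pos (T - exp 1)). unfold Rdiv. nra.
Qed.

Lemma inv_fact_le (n : nat) : / INR (fact n) <= 2 / INR (S n).
Proof.
  assert (H : (S n <= 2 * fact n)%nat).
  { induction n as [|n IH]; [simpl; lia|]. rewrite fact_simpl. pose proof (lt_O_fact n). nia. }
  apply le_INR in H. rewrite mult_INR in H. simpl (INR 2) in H.
  pose proof (INR_fact_lt_0 n). assert (0 < INR (S n)) by (apply lt_0_INR; lia).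
  apply Rle_div_r; [lra|]. apply (Rmult_le_reg_l (INR (fact n))); [lra|].
  rewrite <- Rmult_assoc, Rinv_r, Rmult_1_l by lra. lra.
Qed.

Lemma partial_sums_lim :
  is_lim_seq (fun M => sum_f_R0 (fun m => summand (S m)) M)
    (exp 1 * ln 2 - cosh 1 + 1 - gompertz_head).
Proof.
  apply (is_lim_seq_of_rate _ _ 6). intros M.
  eapply Rle_trans; [apply partial_sum_sub_limit_le|].
  pose proof (inv_fact_le M). unfold Rdiv in *. lra.
Qed.

Lemma exp_neg_lt_inv (b : R) : 0 < b -> exp (- b) < / b.
Proof.
  intros Hb. rewrite exp_Ropp. apply Rinv_lt_contravar.
  - apply Rmult_lt_0_compat; [exact Hb | apply exp_pos].
  - pose proof (exp_ineq1_le b). lra.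
Qed.

Lemma eq_0_of_Rabs_le_inv_S (d : R) : (forall n, Rabs d <= / INR (S n)) -> d = 0.
Proof.
  intros Hd.
  assert (H : is_lim_seq (fun _ => d) 0).
  { apply (is_lim_seq_of_rate _ _ 1). intros n. rewrite Rminus_0_r, Rdiv_1_l. apply Hd. }
  apply is_lim_seq_unique in H. rewrite Lim_seq_const in H. now injection H.
Qed.

Section ExpDominatedIntegral.

Variables (f : R -> R) (a : R).
Hypothesis f_cont : forall x, a <= x -> continuous f x.
Hypothesis f_bound : forall x, a <= x -> 0 <= f x <= exp (- x).

Lemma ex_RInt_exp_dominated (b c : R) : a <= b -> a <= c -> ex_RInt f b c.
Proof.
  intros Hb Hc. apply (@ex_RInt_continuous R_CompleteNormedModule).
  intros x Hx. apply f_cont. unfold Rmin in Hx. destruct (Rle_dec b c); lra.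
Qed.

Lemma RInt_exp_dominated_bound (b c : R) : a <= b <= c ->
  0 <= RInt f b c <= exp (- b) - exp (- c).
Proof.
  intros Hbc.
  assert (Hf := RInt_correct _ _ _ (ex_RInt_exp_dominated b c ltac:(lra) ltac:(lra))).
  assert (Hexp : is_RInt (fun x => exp (- x)) b c (exp (- b) - exp (- c))).
  { replace (exp (- b) - exp (- c)) with (- exp (- c) - - exp (- b)) by ring.
    apply (is_RInt_of_derive (fun x => - exp (- x))); intros x _.
    - auto_derive; [auto | ring].
    - apply continuous_of_ex_derive. auto_derive. auto. }
  split.
  - apply (is_RInt_ge_0 _ _ _ _ (proj2 Hbc) Hf). intros x Hx. apply f_bound. lra.
  - apply (is_RInt_le _ _ _ _ _ _ (proj2 Hbc) Hf Hexp). intros x Hx. apply f_bound. lra.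
Qed.

Lemma RInt_exp_dominated_Chasles (b c : R) : a <= b -> a <= c ->
  RInt f a c = RInt f a b + RInt f b c.
Proof.
  intros Hb Hc. symmetry.
  apply (RInt_Chasles (V := R_CompleteNormedModule)); apply ex_RInt_exp_dominated; lra.
Qed.

Let L : R := real (Lim_seq (fun n => RInt f a (a + INR n))).

Lemma is_lim_seq_RInt_exp_dominated : is_lim_seq (fun n => RInt f a (a + INR n)) L.
Proof.
  assert (Hex : ex_finite_lim_seq (fun n => RInt f a (a + INR n))).
  { apply (ex_finite_lim_seq_incr _ (exp (- a))); intros n; pose proof (pos_INR n).
    - rewrite S_INR, (RInt_exp_dominated_Chasles (a + INR n) (a + (INR n + 1))) by lra.
      pose proof (RInt_exp_dominated_bound (a + INR n) (a + (INR n + 1))). lra.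
    - pose proof (RInt_exp_dominated_bound a (a + INR n)).
      pose proof (exp_pos (- (a + INR n))). lra. }
  destruct Hex as [l Hl]. unfold L. rewrite (is_lim_seq_unique _ _ Hl). exact Hl.
Qed.

Lemma RInt_exp_dominated_tail (b : R) : a <= b -> 0 <= L - RInt f a b <= exp (- b).
Proof.
  intros Hb. destruct (nfloor_ex (b - a)) as [N HN]; [lra|].
  assert (Hev : eventually (fun n => RInt f a b <= RInt f a (a + INR n) <= RInt f a b + exp (- b))).
  { exists (S N). intros n Hn. assert (INR (S N) <= INR n) by (apply le_INR; lia).
    rewrite S_INR in *. rewrite (RInt_exp_dominated_Chasles b (a + INR n)) by lra.
    pose proof (RInt_exp_dominated_bound b (a + INR n)).
    pose proof (exp_pos (- (a + INR n))). lra. }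
  assert (Hlow := is_lim_seq_le_loc (fun _ => RInt f a b) _ _ _
                   (filter_imp _ _ (fun n H => proj1 H) Hev)
                   (is_lim_seq_const _) is_lim_seq_RInt_exp_dominated).
  assert (Hup := is_lim_seq_le_loc _ (fun _ => RInt f a b + exp (- b)) _ _
                   (filter_imp _ _ (fun n H => proj2 H) Hev)
                   is_lim_seq_RInt_exp_dominated (is_lim_seq_const _)).
  simpl in Hlow, Hup. lra.
Qed.

Lemma is_RInt_gen_exp_dominated : is_RInt_gen f (at_point a) (Rbar_locally p_infty) L.
Proof.
  intros P [eps HP].
  pose proof (cond_pos eps) as Heps.
  apply (Filter_prod _ _ _ (fun x => x = a) (fun b => Rmax a (- ln eps) < b));
    [reflexivity | exists (Rmax a (- ln eps)); auto |].
  intros x b -> Hb. simpl.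
  assert (Hab : a < b) by (eapply Rle_lt_trans; [apply Rmax_l | exact Hb]).
  assert (Hexp : exp (- b) < eps).
  { rewrite <- (exp_ln eps) by exact Heps. apply exp_increasing.
    assert (- ln eps < b) by (eapply Rle_lt_trans; [apply Rmax_r | exact Hb]). lra. }
  exists (RInt f a b). split.
  - apply (RInt_correct (V := R_CompleteNormedModule)), ex_RInt_exp_dominated; lra.
  - apply HP. change (Rabs (RInt f a b - L) < eps).
    pose proof (RInt_exp_dominated_tail b (Rlt_le _ _ Hab)).
    rewrite Rabs_minus_sym, Rabs_pos_eq; lra.
Qed.

Lemma RInt_gen_exp_dominated_tail (b : R) : a <= b ->
  0 <= RInt_gen f (at_point a) (Rbar_locally p_infty) - RInt f a b <= exp (- b).
Proof.
  rewrite (is_RInt_gen_unique _ _ is_RInt_gen_exp_dominated). apply RInt_exp_dominated_tail.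
Qed.

End ExpDominatedIntegral.

Lemma exp_neg_div_bounds (x c : R) : 1 <= c -> 0 <= exp (- x) / c <= exp (- x).
Proof.
  intros Hc. pose proof (exp_pos (- x)).
  pose proof (inv_pos_le_1 c Hc).
  unfold Rdiv. split; nra.
Qed.

Definition E1_2 : R := RInt_gen (fun u => exp (- u) / u) (at_point 2) (Rbar_locally p_infty).

Lemma E1_2_tail (b : R) : 2 <= b ->
  0 <= E1_2 - RInt (fun u => exp (- u) / u) 2 b <= exp (- b).
Proof.
  apply RInt_gen_exp_dominated_tail; intros x Hx.
  - apply continuous_of_ex_derive. auto_derive. lra.
  - apply exp_neg_div_bounds. lra.
Qed.

Lemma euler_gompertz_tail (b : R) : 0 <= b ->
  0 <= euler_gompertz - RInt (fun x => exp (- x) / (1 + x)) 0 b <= exp (- b).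
Proof.
  apply RInt_gen_exp_dominated_tail; intros x Hx.
  - apply continuous_of_ex_derive. auto_derive. lra.
  - apply exp_neg_div_bounds. lra.
Qed.

(* Substitute [u = x + 1] on [[1, b]]. *)
Lemma RInt_gompertz_integrand_split (b : R) : 1 <= b ->
  RInt (fun x => exp (- x) / (1 + x)) 0 b
  = gompertz_head + exp 1 * RInt (fun u => exp (- u) / u) 2 (b + 1).
Proof.
  intros Hb.
  assert (Hshift : RInt (fun x => exp (- x) / (1 + x)) 1 b
                   = exp 1 * RInt (fun u => exp (- u) / u) 2 (b + 1)).
  { apply (is_RInt_unique (V := R_CompleteNormedModule)).
    replace 2 with (1 * 1 + 1) by ring. replace (b + 1) with (1 * b + 1) by ring.
    assert (Hex : ex_RInt (fun u => exp (- u) / u) (1 * 1 + 1) (1 * b + 1)).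
    { apply ex_RInt_of_ex_derive. intros x Hx. rewrite Rmin_left, Rmax_right in Hx by lra.
      auto_derive. lra. }
    apply (is_RInt_ext (fun x => scal (exp 1) (scal 1 (exp (- (1 * x + 1)) / (1 * x + 1))))).
    - intros x Hx. rewrite Rmin_left, Rmax_right in Hx by lra.
      unfold scal; simpl; unfold mult; simpl.
      replace (- (1 * x + 1)) with (- x + - (1)) by ring. rewrite exp_plus, !exp_Ropp.
      pose proof (exp_pos x). pose proof (exp_pos 1).
      field. repeat split; apply Rgt_not_eq; lra.
    - exact (is_RInt_scal _ _ _ _ _ (is_RInt_comp_lin _ _ _ _ _ _ (RInt_correct _ _ _ Hex))). }
  rewrite <- (RInt_Chasles (V := R_CompleteNormedModule) _ 0 1 b)
    by (apply ex_RInt_gompertz_integrand; lra).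
  rewrite Hshift. reflexivity.
Qed.

Lemma euler_gompertz_eq : euler_gompertz = gompertz_head + exp 1 * E1_2.
Proof.
  apply Rminus_diag_uniq, eq_0_of_Rabs_le_inv_S. intros n.
  set (b := INR (S n)).
  assert (Hb : 1 <= b) by (apply (le_INR 1); lia).
  pose proof (euler_gompertz_tail b ltac:(lra)) as Hgomp.
  pose proof (E1_2_tail (b + 1) ltac:(lra)) as HE1.
  rewrite (RInt_gompertz_integrand_split b Hb) in Hgomp.
  set (K := RInt (fun u => exp (- u) / u) 2 (b + 1)) in *.
  assert (Hexp : exp 1 * exp (- (b + 1)) = exp (- b)) by (rewrite <- exp_plus; f_equal; ring).
  assert (Hscaled : 0 <= exp 1 * (E1_2 - K) <= exp (- b)).
  { pose proof (exp_pos 1). split; [|rewrite <- Hexp; apply Rmult_le_compat_l]; nra. }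
  pose proof (exp_neg_lt_inv b ltac:(lra)).
  apply Rabs_le. nra.
Qed.

Lemma exp_pow (x : R) (n : nat) : exp x ^ n = exp (INR n * x).
Proof.
  induction n as [|n IH]; [simpl; rewrite Rmult_0_l, exp_0; reflexivity|].
  simpl pow. rewrite IH, <- exp_plus, S_INR. f_equal. ring.
Qed.

Lemma exp_neg_sub_pow_bounds (n : nat) (t : R) : (1 <= n)%nat -> 0 <= t <= INR n ->
  0 <= exp (- t) - (1 - t / INR n) ^ n <= t ^ 2 * exp (- t) / INR n.
Proof.
  intros Hn Ht. assert (HN : 0 < INR n) by (apply lt_0_INR; lia).
  set (y := t / INR n).
  assert (Hy : 0 <= y <= 1).
  { unfold y. split; [apply Rdiv_le_0_compat; lra|]. apply (Rdiv_le_1 t (INR n) HN). lra. }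
  assert (Hty : INR n * y = t) by (unfold y; field; lra).
  split.
  - assert (H : (1 - y) ^ n <= exp (- y) ^ n).
    { apply pow_incr. pose proof (exp_ineq1_le (- y)). lra. }
    rewrite exp_pow in H. replace (INR n * - y) with (- t) in H by lra. lra.
  - assert (H1 : (1 - y ^ 2) ^ n <= ((1 - y) * exp y) ^ n).
    { apply pow_incr. pose proof (exp_ineq1_le y). nra. }
    rewrite Rpow_mult_distr, exp_pow, Hty in H1.
    assert (H2 := Bernoulli_ineq (- y ^ 2) n ltac:(nra)).
    replace (1 + - y ^ 2) with (1 - y ^ 2) in H2 by ring.
    replace (INR n * - y ^ 2) with (- (t ^ 2 / INR n)) in H2 by (rewrite <- Hty; field; lra).
    assert (H3 : (1 - t ^ 2 / INR n) * exp (- t) <= (1 - y) ^ n).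
    { replace ((1 - y) ^ n) with ((1 - y) ^ n * exp t * exp (- t))
        by (rewrite Rmult_assoc, <- exp_plus, Rplus_opp_r, exp_0; ring).
      apply Rmult_le_compat_r; [apply Rlt_le, exp_pos | lra]. }
    unfold Rdiv in *. lra.
Qed.

(* [(1 - (1 - t / n) ^ n) / t] written as a geometric sum, which has no singularity at [t = 0]. *)
Definition harmonic_integrand (n : nat) (t : R) : R :=
  sum_f_R0 (fun k => (1 - t / INR n) ^ k / INR n) (pred n).

Lemma harmonic_RInt (n : nat) : (1 <= n)%nat ->
  is_RInt (harmonic_integrand n) 0 (INR n) (sum_f_R0 (fun k => / INR (S k)) (pred n)).
Proof.
  intros Hn. assert (HN : 0 < INR n) by (apply lt_0_INR; lia).
  apply (is_RInt_sum_f_R0 (fun k t => (1 - t / INR n) ^ k / INR n)). intros k.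
  assert (Hk : INR (S k) <> 0) by (apply not_0_INR; lia).
  apply (is_RInt_ext (fun t => scal (/ INR n) ((- / INR n * t + 1) ^ k))).
  { intros t _. unfold scal; simpl; unfold mult; simpl.
    replace (- / INR n * t + 1) with (1 - t / INR n) by (field; lra). field. lra. }
  assert (HN0 : INR n <> 0) by (apply Rgt_not_eq; lra).
  replace (/ INR (S k)) with (/ INR n
    * (((- / INR n * INR n + 1) ^ S k - (- / INR n * 0 + 1) ^ S k) / (- / INR n * INR (S k)))).
  { apply (is_RInt_scal (V := R_NormedModule)), is_RInt_affine_pow.
    apply Ropp_neq_0_compat, Rinv_neq_0_compat. exact HN0. }
  replace (- / INR n * INR n + 1) with 0 by (field; exact HN0).
  rewrite Rmult_0_r, Rplus_0_l, pow1, pow_i by lia. field. auto.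
Qed.

Definition harmonic_defect (n : nat) (t : R) : R := (exp (- t) - (1 - t / INR n) ^ n) / t.

Lemma harmonic_integrand_eq (n : nat) (t : R) : (1 <= n)%nat -> t <> 0 ->
  harmonic_integrand n t = (1 - exp (- t)) / t + harmonic_defect n t.
Proof.
  intros Hn Ht. assert (HN : INR n <> 0) by (apply not_0_INR; lia).
  unfold harmonic_integrand, harmonic_defect.
  set (q := 1 - t / INR n).
  pose proof (GP_finite q (pred n)) as Hgeom.
  replace (pred n + 1)%nat with n in Hgeom by lia.
  unfold Rdiv.
  rewrite <- (scal_sum (fun k => q ^ k) (pred n) (/ INR n)).
  apply (Rmult_eq_reg_l t); [|exact Ht].
  replace (t * (/ INR n * sum_f_R0 (fun k => q ^ k) (pred n)))
    with (- (sum_f_R0 (fun k => q ^ k) (pred n) * (q - 1))) by (unfold q; field; exact HN).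
  rewrite Hgeom. field. exact Ht.
Qed.

(* At [t = 0] both bounds are [0], since [/ 0 = 0]. *)
Lemma harmonic_defect_bounds (n : nat) (t : R) : (1 <= n)%nat -> 0 <= t <= INR n ->
  0 <= harmonic_defect n t <= t * exp (- t) / INR n.
Proof.
  intros Hn Ht. unfold harmonic_defect.
  destruct (Req_dec t 0) as [->|Ht0]; [rewrite Rdiv_0_r; unfold Rdiv; lra|].
  destruct (exp_neg_sub_pow_bounds n t Hn Ht) as [Hlow Hup].
  assert (Htpos : 0 < t) by lra.
  split; [apply Rdiv_le_0_compat; lra|].
  apply Rle_div_l; [exact Htpos|].
  replace (t * exp (- t) / INR n * t) with (t ^ 2 * exp (- t) / INR n) by (unfold Rdiv; ring).
  exact Hup.
Qed.

Definition Ein_integrand (t : R) : R := if Req_EM_T t 0 then 1 else (1 - exp (- t)) / t.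

(* Continuity at [0] is the derivative [exp' 0 = 1]. *)
Lemma continuous_Ein_integrand (t : R) : continuous Ein_integrand t.
Proof.
  destruct (Req_EM_T t 0) as [->|Ht].
  - apply continuity_pt_filterlim. intros eps Heps.
    destruct (derivable_pt_lim_exp_0 eps Heps) as [delta Hdelta].
    exists delta. split; [apply cond_pos|].
    intros x [[_ Hx0] Hx]. simpl in *. unfold R_dist in *. rewrite Rminus_0_r in Hx.
    unfold Ein_integrand.
    destruct (Req_EM_T x 0) as [E|_]; [congruence|].
    destruct (Req_EM_T 0 0) as [_|E]; [|congruence].
    assert (Hh : - x <> 0) by lra.
    specialize (Hdelta (- x) Hh ltac:(rewrite Rabs_Ropp; exact Hx)).
    rewrite Rplus_0_l, exp_0 in Hdelta.
    replace ((1 - exp (- x)) / x) with ((exp (- x) - 1) / - x) by (field; lra). exact Hdelta.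
  - apply (continuous_ext_loc _ (fun x => (1 - exp (- x)) / x)).
    + assert (Hpos : 0 < Rabs t) by (apply Rabs_pos_lt, Ht).
      exists (mkposreal _ Hpos). intros y Hy. unfold Ein_integrand.
      destruct (Req_EM_T y 0) as [->|_]; [|reflexivity].
      exfalso. change (Rabs (0 - t) < Rabs t) in Hy. rewrite Rminus_0_l, Rabs_Ropp in Hy. lra.
    + apply continuous_of_ex_derive. auto_derive. exact Ht.
Qed.

Lemma Ein_2_eq : Ein 2 = RInt Ein_integrand 0 2.
Proof.
  apply RInt_ext. intros x Hx. rewrite Rmin_left, Rmax_right in Hx by lra.
  unfold Ein_integrand. destruct (Req_EM_T x 0); [lra | reflexivity].
Qed.

Lemma RInt_harmonic_0_2_sub_Ein_le (n : nat) : (2 <= n)%nat ->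
  Rabs (RInt (harmonic_integrand n) 0 2 - Ein 2) <= 4 / INR n.
Proof.
  intros Hn. assert (HN : 2 <= INR n) by (apply (le_INR 2); lia).
  assert (Hex : ex_RInt (harmonic_integrand n) 0 2).
  { apply (ex_RInt_Chasles_1 (V := R_CompleteNormedModule) _ 0 2 (INR n)); [lra|].
    eexists. apply harmonic_RInt. lia. }
  assert (HEin : ex_RInt Ein_integrand 0 2).
  { apply (@ex_RInt_continuous R_CompleteNormedModule). intros. apply continuous_Ein_integrand. }
  assert (Hdefect : is_RInt (harmonic_defect n) 0 2 (RInt (harmonic_integrand n) 0 2 - Ein 2)).
  { rewrite Ein_2_eq.
    apply (is_RInt_ext (fun t => harmonic_integrand n t - Ein_integrand t)).
    - intros t Ht. rewrite Rmin_left, Rmax_right in Ht by lra.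
      unfold Ein_integrand. destruct (Req_EM_T t 0); [lra|].
      rewrite harmonic_integrand_eq by (lia || lra). simpl. ring.
    - exact (is_RInt_minus _ _ _ _ _ _ (RInt_correct _ _ _ Hex) (RInt_correct _ _ _ HEin)). }
  replace (4 / INR n) with ((2 - 0) * (2 / INR n)) by (field; apply Rgt_not_eq; lra).
  apply (norm_RInt_le_const (V := R_NormedModule) (harmonic_defect n) 0 2 _ _ ltac:(lra));
    [|exact Hdefect].
  intros t Ht. change (norm _) with (Rabs (harmonic_defect n t)).
  destruct (harmonic_defect_bounds n t ltac:(lia) ltac:(lra)) as [Hlow Hup].
  rewrite Rabs_pos_eq by exact Hlow. eapply Rle_trans; [exact Hup|].
  assert (exp (- t) <= 1) by (rewrite <- exp_0; apply exp_le_exp; lra).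
  apply Rmult_le_compat_r; [apply Rlt_le, Rinv_0_lt_compat; lra|].
  pose proof (exp_pos (- t)). nra.
Qed.

Lemma ex_RInt_harmonic_defect (n : nat) (a b : R) : (1 <= n)%nat -> 0 < a -> 0 < b ->
  ex_RInt (harmonic_defect n) a b.
Proof.
  intros Hn Ha Hb. assert (HN : INR n <> 0) by (apply not_0_INR; lia).
  apply ex_RInt_of_ex_derive. intros x Hx.
  assert (Hx0 : x <> 0) by (apply Rgt_not_eq; unfold Rmin in Hx; destruct (Rle_dec a b); lra).
  unfold harmonic_defect. auto_derive. auto.
Qed.

Lemma RInt_harmonic_defect_2_le (n : nat) : (2 <= n)%nat ->
  0 <= RInt (harmonic_defect n) 2 (INR n) <= / INR n.
Proof.
  intros Hn. assert (HN : 2 <= INR n) by (apply (le_INR 2); lia).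
  assert (HN0 : INR n <> 0) by (apply Rgt_not_eq; lra).
  assert (Hdefect := RInt_correct _ _ _
                       (ex_RInt_harmonic_defect n 2 (INR n) ltac:(lia) ltac:(lra) ltac:(lra))).
  assert (Hbounds : forall t, 2 < t < INR n -> 0 <= harmonic_defect n t <= t * exp (- t) / INR n)
    by (intros t Ht; apply harmonic_defect_bounds; [lia | lra]).
  set (F := fun t => - (t + 1) * exp (- t) / INR n).
  assert (HF : is_RInt (fun t => t * exp (- t) / INR n) 2 (INR n) (F (INR n) - F 2)).
  { apply is_RInt_of_derive; intros x _.
    - unfold F. auto_derive; [exact I | field; exact HN0].
    - apply continuous_of_ex_derive. auto_derive. exact I. }
  split.
  - apply (is_RInt_ge_0 _ 2 (INR n) _ ltac:(lra) Hdefect). intros t Ht. apply Hbounds, Ht.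
  - eapply Rle_trans.
    { apply (is_RInt_le _ _ 2 (INR n) _ _ ltac:(lra) Hdefect HF). intros t Ht. apply Hbounds, Ht. }
    assert (H3 : 3 * exp (- (2)) <= 1).
    { rewrite exp_Ropp. pose proof (exp_ineq1_le 2). pose proof (exp_pos 2).
      apply (Rmult_le_reg_r (exp 2)); [lra|]. rewrite Rmult_assoc, Rinv_l; lra. }
    replace (F (INR n) - F 2) with ((3 * exp (- (2)) - (INR n + 1) * exp (- INR n)) * / INR n)
      by (unfold F; field; exact HN0).
    rewrite <- (Rmult_1_l (/ INR n)) at 2.
    apply Rmult_le_compat_r; [apply Rlt_le, Rinv_0_lt_compat; lra|].
    pose proof (exp_pos (- INR n)). nra.
Qed.

Lemma RInt_inv (a b : R) : 0 < a -> 0 < b -> is_RInt (fun t => / t) a b (ln b - ln a).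
Proof.
  intros Ha Hb.
  apply is_RInt_of_derive; intros x Hx;
    assert (Hx0 : 0 < x) by (unfold Rmin in Hx; destruct (Rle_dec a b); lra).
  - apply is_derive_ln, Hx0.
  - apply continuous_of_ex_derive. auto_derive. apply Rgt_not_eq, Hx0.
Qed.

Lemma harmonic_sub_ln_eq (n : nat) : (2 <= n)%nat ->
  sum_f_R0 (fun k => / INR (S k)) (pred n) - ln (INR n)
  = RInt (harmonic_integrand n) 0 2 - ln 2 - RInt (fun u => exp (- u) / u) 2 (INR n)
    + RInt (harmonic_defect n) 2 (INR n).
Proof.
  intros Hn. assert (HN : 2 <= INR n) by (apply (le_INR 2); lia).
  assert (HG := harmonic_RInt n ltac:(lia)).
  assert (HGex : ex_RInt (harmonic_integrand n) 0 (INR n)) by (eexists; exact HG).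
  assert (HE1 : ex_RInt (fun u => exp (- u) / u) 2 (INR n)).
  { apply ex_RInt_of_ex_derive. intros x Hx. rewrite Rmin_left, Rmax_right in Hx by lra.
    auto_derive. apply Rgt_not_eq. lra. }
  assert (H2n : RInt (harmonic_integrand n) 2 (INR n)
                = ln (INR n) - ln 2 - RInt (fun u => exp (- u) / u) 2 (INR n)
                  + RInt (harmonic_defect n) 2 (INR n)).
  { apply (is_RInt_unique (V := R_CompleteNormedModule)).
    apply (is_RInt_ext (fun t => / t - exp (- t) / t + harmonic_defect n t)).
    - intros t Ht. rewrite Rmin_left, Rmax_right in Ht by lra.
      rewrite harmonic_integrand_eq by (lia || apply Rgt_not_eq; lra).
      simpl. field. apply Rgt_not_eq. lra.
    - exact (is_RInt_plus _ _ _ _ _ _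
               (is_RInt_minus _ _ _ _ _ _
                  (RInt_inv 2 (INR n) ltac:(lra) ltac:(lra)) (RInt_correct _ _ _ HE1))
               (RInt_correct _ _ _
                  (ex_RInt_harmonic_defect n 2 (INR n) ltac:(lia) ltac:(lra) ltac:(lra)))). }
  rewrite <- (is_RInt_unique _ _ _ _ HG).
  rewrite <- (RInt_Chasles (V := R_CompleteNormedModule) _ 0 2 (INR n)).
  - change (plus ?x ?y) with (x + y). rewrite H2n. ring.
  - apply (ex_RInt_Chasles_1 _ 0 2 (INR n)); [lra | exact HGex].
  - apply (ex_RInt_Chasles_2 _ 0 2 (INR n)); [lra | exact HGex].
Qed.

Lemma harmonic_sub_ln_rate (n : nat) : (2 <= n)%nat ->
  Rabs (sum_f_R0 (fun k => / INR (S k)) (pred n) - ln (INR n) - (Ein 2 - ln 2 - E1_2))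
  <= 6 / INR n.
Proof.
  intros Hn. assert (HN : 2 <= INR n) by (apply (le_INR 2); lia).
  rewrite harmonic_sub_ln_eq by exact Hn.
  pose proof (RInt_harmonic_0_2_sub_Ein_le n Hn) as H02.
  pose proof (RInt_harmonic_defect_2_le n Hn) as Hdefect.
  pose proof (E1_2_tail (INR n) HN) as Htail.
  pose proof (exp_neg_lt_inv (INR n) ltac:(lra)).
  apply Rabs_le_between in H02. apply Rabs_le_between. unfold Rdiv in *. lra.
Qed.

Lemma euler_gamma_eq : euler_gamma = Ein 2 - ln 2 - E1_2.
Proof.
  assert (H : is_lim_seq (fun n => sum_f_R0 (fun k => / INR (S k)) (pred n) - ln (INR n))
                (Ein 2 - ln 2 - E1_2)).
  { apply (is_lim_seq_incr_n _ 2), (is_lim_seq_of_rate _ _ 6). intros m.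
    eapply Rle_trans; [apply harmonic_sub_ln_rate; lia|].
    apply Rmult_le_compat_l; [lra|]. apply Rinv_le_contravar; [apply lt_0_INR; lia|].
    apply le_INR. lia. }
  unfold euler_gamma. rewrite (is_lim_seq_unique _ _ H). reflexivity.
Qed.

Theorem mainTheorem9 :
  is_series (fun n => summand (S n))
    (exp 1 * (Ein 2 - euler_gamma) - cosh 1 - euler_gompertz + 1).
Proof.
  rewrite euler_gamma_eq, euler_gompertz_eq.
  replace (exp 1 * (Ein 2 - (Ein 2 - ln 2 - E1_2)) - cosh 1 - (gompertz_head + exp 1 * E1_2) + 1)
    with (exp 1 * ln 2 - cosh 1 + 1 - gompertz_head) by ring.
  exact (is_lim_seq_ext _ _ _ (fun M => eq_sym (sum_n_Reals _ M)) partial_sums_lim).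
Qed.
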